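(* Greedy Dual is $(2m+1)$-competitive for both MPMD and MBPMD. That is, for every metric space and every instance $\mathcal{I}$ with $2m$ requests, the total cost (connection plus waiting) of the matching produced by Greedy Dual is at most $(2m+1)\cdot\mathrm{Opt}(\mathcal{I})$.
   Context: Problem (MPMD / MBPMD). Let $(\mathcal{X},\mathrm{dist})$ be a metric space. An instance consists of $2m$ requests $u_1,\dots,u_{2m}$. Each request $u$ is a triple $(\mathrm{pos}(u),\mathrm{atime}(u),\mathrm{sgn}(u))$, where $\mathrm{pos}(u)\in\mathcal{X}$ is its location and $\mathrm{atime}(u)\ge0$ is its arrival time, with arrival times nondecreasing. In MPMD, $\mathrm{sgn}(u)=0$ for all requests. In MBPMD, exactly $m$ requests have sign $+1$ and $m$ have sign $-1$. At time $\tau$, an algorithm may match two arrived, unmatched requests $u,v$ with $\mathrm{sgn}(u)=-\mathrm{sgn}(v)$, at cost $\mathrm{dist}(\mathrm{pos}(u),\mathrm{pos}(v))$ (connection cost) plus $(\tau-\mathrm{atime}(u))+(\tau-\mathrm{atime}(v))$ (waiting costs). All requests must eventually be matched. The online algorithm does not know future requests or $m$ in advance. $\mathrm{Opt}(\mathcal{I})$ denotes the minimum total cost of an offline solution that knows the whole input in advance. Notation. Edges are unordered pairs $\{u,v\}$ of distinct requests with $\mathrm{sgn}(u)=-\mathrm{sgn}(v)$. For a set $S$ of requests, $\delta(S)$ is the set of edges with exactly one endpoint in $S$. In MPMD, $\mathrm{sur}(S)=|S|\bmod 2$; in MBPMD, $\mathrm{sur}(S)=|\sum_{u\in S}\mathrm{sgn}(u)|$.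 For an edge $e=(u,v)$, $\mathrm{cost}(e)=\mathrm{dist}(\mathrm{pos}(u),\mathrm{pos}(v))+|\mathrm{atime}(u)-\mathrm{atime}(v)|$. Algorithm Greedy Dual (GD). GD maintains a dual variable $y_S\ge0$ for every set $S$ of already-arrived requests; $y_S(\tau)$ denotes its value at time $\tau$. It also maintains a partition of the arrived requests into active sets, with $\mathcal{A}(u)$ denoting the active set containing $u$. An active set is growing if it contains at least one free request, and non-growing otherwise. - When a request $u$ arrives, $\mathcal{A}(u)\leftarrow\{u\}$ becomes a new active set, and $y_S\leftarrow 0$ for every new set $S$ containing $u$. - Tight-constraint event: while there is an edge $e=(u,v)$ between arrived requests with $\mathcal{A}(u)\neq\mathcal{A}(v)$ and $\sum_{S:\,e\in\delta(S)}y_S=\mathrm{cost}(e)$, GD does the following. It merges the two sets: $S=\mathcal{A}(u)\cup\mathcal{A}(v)$ becomes active and $\mathcal{A}(w)\leftarrow S$ for all $w\in S$, while $\mathcal{A}(u)$ and $\mathcal{A}(v)$ become inactive. It marks the edge $e$. Then, while there are free $u',v'\in S$ with $\mathrm{sgn}(u')=-\mathrm{sgn}(v')$, it matches $u'$ with $v'$ at the current time. - At all other times, $y_S$ increases continuously at rate $1$ (the same rate as time) for every active growing set $S$; all other dual variables stay constant. *)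

From Stdlib Require Import Reals ZArith.
From mathcomp Require Import all_boot.
From Stdlib Require List.

Local Open Scope R_scope.

Record metric (X : Type) (dist : X -> X -> R) : Prop := {
  dist_refl  : forall x, dist x x = 0;
  dist_sep   : forall x y, dist x y = 0 -> x = y;
  dist_sym   : forall x y, dist x y = dist y x;
  dist_nonneg: forall x y, 0 <= dist x y;
  dist_tri   : forall x y z, dist x z <= dist x y + dist y z
}.

Record instance (X : Type) (n : nat) := Inst {
  pos   : 'I_n -> X;
  atime : 'I_n -> R;
  sgn   : 'I_n -> Z
}.
Arguments pos {X n}.
Arguments atime {X n}.
Arguments sgn {X n}.

(* Well-formed instance with 2m requests.  [bip = false]: MPMD (all signs 0);
   [bip = true]: MBPMD (m signs +1 and m signs -1).  Arrival times are
   nonnegative and nondecreasing in the index. *)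
Definition valid_instance (X : Type) (bip : bool) (m : nat)
    (I : instance X (2 * m)) : Prop :=
  (forall i, 0 <= atime I i) /\
  (forall i j : 'I_(2 * m), (i <= j)%N -> atime I i <= atime I j) /\
  (if bip then
     (forall i, sgn I i = 1%Z \/ sgn I i = (-1)%Z) /\
     #|[set i | Z.eqb (sgn I i) 1%Z]| = m /\
     #|[set i | Z.eqb (sgn I i) (-1)%Z]| = m
   else forall i, sgn I i = 0%Z).

Section Matching.
Variables (X : Type) (dist : X -> X -> R) (n : nat) (I : instance X n).

Definition compat (u v : 'I_n) : Prop := u <> v /\ sgn I u = (- sgn I v)%Z.

Definition ecost (u v : 'I_n) : R :=
  dist (pos I u) (pos I v) + Rabs (atime I u - atime I v).

(* A matched pair (u, v, tau): u and v matched at time tau. *)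
Definition mtriple := ('I_n * 'I_n * R)%type.

Definition pair_cost (p : mtriple) : R :=
  let '(u, v, t) := p in
  dist (pos I u) (pos I v) + (t - atime I u) + (t - atime I v).

Definition total_cost (s : seq mtriple) : R :=
  foldr (fun p acc => pair_cost p + acc) 0 s.

Definition endpoints (s : seq mtriple) : seq 'I_n :=
  flatten [seq [:: p.1.1; p.1.2] | p <- s].

Definition offline_solution (s : seq mtriple) : Prop :=
  uniq (endpoints s) /\ (forall w, w \in endpoints s) /\
  List.Forall (fun p : mtriple => let '(u, v, t) := p in
                 compat u v /\ atime I u <= t /\ atime I v <= t) s.

Record gstate := GS {
  now  : R;
  narr : nat;
  act  : 'I_n -> {set 'I_n};       (* A(u), for arrived u                 *)
  dual : {set 'I_n} -> R;
  out  : seq mtriple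
}.

Definition arrived (s : gstate) (u : 'I_n) : bool := (u < narr s)%N.
Definition free (s : gstate) (u : 'I_n) : bool := u \notin endpoints (out s).
Definition active (s : gstate) (S : {set 'I_n}) : bool :=
  [exists u, arrived s u && (act s u == S)].
Definition growing (s : gstate) (S : {set 'I_n}) : bool :=
  active s S && [exists w in S, free s w].

Definition dualsum (y : {set 'I_n} -> R) (u v : 'I_n) : R :=
  \big[Rplus/0]_(S : {set 'I_n} | (u \in S) != (v \in S)) y S.

Definition no_tight (s : gstate) : Prop :=
  forall u v, arrived s u -> arrived s v -> compat u v ->
    act s u != act s v -> dualsum (dual s) u v < ecost u v.

Definition dual_feasible (s : gstate) : Prop :=
  forall u v, arrived s u -> arrived s v -> compat u v ->
    act s u != act s v -> dualsum (dual s) u v <= ecost u v.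

Definition init_state : gstate :=
  GS 0 0 (fun _ => set0) (fun _ => 0) [::].

Definition grown (s : gstate) (d : R) : gstate :=
  GS (now s + d) (narr s) (act s)
     (fun S => if growing s S then dual s S + d else dual s S) (out s).

Definition arrive (s : gstate) (u : 'I_n) : gstate :=
  GS (now s) (narr s).+1 (fun w => if w == u then [set u] else act s w)
     (fun S => if u \in S then 0 else dual s S) (out s).

Definition merged (s : gstate) (u v : 'I_n) (ps : seq ('I_n * 'I_n)) : gstate :=
  let S := act s u :|: act s v in
  GS (now s) (narr s) (fun w => if w \in S then S else act s w) (dual s)
     (out s ++ [seq (p.1, p.2, now s) | p <- ps]).

(* the pairs ps are those matched by the inner while-loop: disjoint pairs of
   free requests of S with opposite signs, after which no two free requests
   of S with opposite signs remain *)
Definition merge_matching_ok (s : gstate) (u v : 'I_n)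
    (ps : seq ('I_n * 'I_n)) : Prop :=
  let S := act s u :|: act s v in
  let s' := merged s u v ps in
  uniq (flatten [seq [:: p.1; p.2] | p <- ps]) /\
  List.Forall (fun p : 'I_n * 'I_n =>
     [/\ p.1 \in S, p.2 \in S, free s p.1, free s p.2 & compat p.1 p.2]) ps /\
  (forall a b, a \in S -> b \in S -> free s' a -> free s' b -> ~ compat a b).

Inductive gd_step : gstate -> gstate -> Prop :=
| gd_grow s d :
    0 < d ->
    no_tight s ->
    (forall u : 'I_n, ~~ arrived s u -> now s + d <= atime I u) ->
    dual_feasible (grown s d) ->
    gd_step s (grown s d)
| gd_arrive s (u : 'I_n) :
    nat_of_ord u = narr s ->
    atime I u = now s ->
    gd_step s (arrive s u)
| gd_merge s u v ps :
    arrived s u -> arrived s v -> compat u v -> act s u != act s v ->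
    dualsum (dual s) u v = ecost u v ->
    merge_matching_ok s u v ps ->
    gd_step s (merged s u v ps).

(* states reachable by some execution of Greedy Dual (any tie-breaking) *)
Inductive gd_reach : gstate -> Prop :=
| gd_reach0 : gd_reach init_state
| gd_reachS s s' : gd_reach s -> gd_step s s' -> gd_reach s'.

Definition gd_done (s : gstate) : Prop :=
  narr s = n /\ forall u, ~~ free s u.

End Matching.

Arguments metric {X}.
Arguments valid_instance {X} bip {m} I.
Arguments gd_reach {X} dist {n} I _.
Arguments gd_done {n} s.
Arguments offline_solution {X n} I s.
Arguments total_cost {X} dist {n} I s.
Arguments out {n} g.

(* Greedy Dual is analysed through invariants of its reachable states.  Besides
   dual feasibility, any two requests a, b of an active set S satisfy
   dist(a, b) <= 2 * sum_{T <= S} y_T, so each of the at most m matched pairs has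
   connection cost at most 2 * sum_T y_T.  Every growing set holds a free request,
   so sum_T y_T is at most the waiting cost W.  Conversely, the free requests of an
   active set S are pairwise incompatible, so their number is the surplus of S,
   which is at most the number of pairs of an optimal solution leaving S; hence
   W <= sum_S |Opt /\ delta(S)| * y_S, which is at most Opt by feasibility.  The
   total cost is thus at most 2m * sum_T y_T + W <= (2m + 1) * Opt. *)

From HB Require Import structures.
From Stdlib Require Import Reals ZArith Lra Lia.
From Stdlib Require List FunctionalExtensionality.
From mathcomp Require Import all_boot zify.

Local Open Scope R_scope.
#[local] Arguments arrived {n}.
#[local] Arguments free {n}.
#[local] Arguments act {n}.
#[local] Arguments dual {n}.
#[local] Arguments now {n}.
#[local] Arguments narr {n}.
#[local] Arguments growing {n}.
#[local] Arguments endpoints {n}.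
#[local] Arguments dualsum {n}.
#[local] Arguments grown {n}.
#[local] Arguments arrive {n}.
#[local] Arguments merged {n}.
#[local] Arguments init_state {n}.
#[local] Arguments compat {X n}.
#[local] Arguments ecost {X} dist {n}.
#[local] Arguments merge_matching_ok {X n}.
#[local] Arguments dual_feasible {X} dist {n}.

HB.instance Definition _ := Monoid.isComLaw.Build R 0 Rplus
  (fun x y z => esym (Rplus_assoc x y z)) Rplus_comm Rplus_0_l.
HB.instance Definition _ := Monoid.isMulLaw.Build R 0 Rmult Rmult_0_l Rmult_0_r.
HB.instance Definition _ :=
  Monoid.isAddLaw.Build R Rmult Rplus Rmult_plus_distr_r Rmult_plus_distr_l.
HB.instance Definition _ := Monoid.isComLaw.Build Z 0%Z Z.add
  Z.add_assoc Z.add_comm Z.add_0_l.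
HB.instance Definition _ := Monoid.isMulLaw.Build Z 0%Z Z.mul Z.mul_0_l Z.mul_0_r.
HB.instance Definition _ :=
  Monoid.isAddLaw.Build Z Z.mul Z.add Z.mul_add_distr_r Z.mul_add_distr_l.

Lemma Rsum_le (J : Type) (r : seq J) (P : pred J) (F G : J -> R) :
  (forall i, P i -> F i <= G i) ->
  \big[Rplus/0]_(i <- r | P i) F i <= \big[Rplus/0]_(i <- r | P i) G i.
Proof. by move=> FG; apply: (big_ind2 Rle) => //; [lra | move=> *; lra]. Qed.

Lemma Rsum_ge0 (J : Type) (r : seq J) (P : pred J) (F : J -> R) :
  (forall i, P i -> 0 <= F i) -> 0 <= \big[Rplus/0]_(i <- r | P i) F i.
Proof. by move=> F0; apply: (big_ind (Rle 0)) => //; [lra | move=> *; lra]. Qed.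

Lemma Rsum_le_widen (J : finType) (P Q : pred J) (F : J -> R) :
  (forall i, 0 <= F i) -> (forall i, P i -> Q i \/ F i = 0) ->
  \big[Rplus/0]_(i | P i) F i <= \big[Rplus/0]_(i | Q i) F i.
Proof.
move=> F0 PQ; rewrite (big_mkcond P) (big_mkcond Q); apply: Rsum_le => i _.
case: (boolP (P i)) => Pi; last by case: (Q i); [apply: F0 | lra].
by case: (PQ _ Pi) => [->|->]; [lra | case: (Q i); lra].
Qed.

Lemma Rsum1_le1 (J : finType) (P : pred J) (j0 : J) :
  (forall j, P j -> j = j0) -> \big[Rplus/0]_(j | P j) 1 <= 1.
Proof.
move=> Pj0; apply: (Rle_trans _ (\big[Rplus/0]_(j | j == j0) 1)).
  by apply: Rsum_le_widen => [j|j /Pj0 ->]; [lra | rewrite eqxx; left].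
by rewrite big_pred1_eq; lra.
Qed.

Lemma Rsum_const (J : Type) (r : seq J) (c : R) :
  \big[Rplus/0]_(i <- r) c = INR (size r) * c.
Proof.
elim: r => [|x r IH]; first by rewrite big_nil /=; ring.
rewrite big_cons IH; change (size (x :: r)) with (size r).+1; rewrite S_INR; ring.
Qed.

Lemma INR_sum (J : Type) (r : seq J) (P : pred J) (F : J -> nat) :
  INR (\sum_(i <- r | P i) F i) = \big[Rplus/0]_(i <- r | P i) INR (F i).
Proof. exact: (big_morph INR plus_INR). Qed.

Lemma Z_of_nat_sum (J : Type) (r : seq J) (P : pred J) (F : J -> nat) :
  Z.of_nat (\sum_(i <- r | P i) F i) =
  \big[Z.add/0%Z]_(i <- r | P i) Z.of_nat (F i).
Proof. exact: (big_morph Z.of_nat Nat2Z.inj_add). Qed.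

Lemma big_In_ind2 {V : Type} (K : V -> V -> Prop) {idx : V} {op : V -> V -> V}
    {J : Type} {r : seq J} {F G : J -> V} :
  K idx idx -> (forall x1 x2 y1 y2, K x1 x2 -> K y1 y2 -> K (op x1 y1) (op x2 y2)) ->
  (forall i, List.In i r -> K (F i) (G i)) ->
  K (\big[op/idx]_(i <- r) F i) (\big[op/idx]_(i <- r) G i).
Proof.
move=> K0 Kop; elim: r => [|x r IH] FG; rewrite ?big_nil ?big_cons //.
by apply: Kop; [apply: FG; left | apply: IH => i ri; apply: FG; right].
Qed.

Lemma Zabs_sum (J : Type) (r : seq J) (F : J -> Z) :
  (Z.abs (\big[Z.add/0%Z]_(i <- r) F i) <= \big[Z.add/0%Z]_(i <- r) Z.abs (F i))%Z.
Proof.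
elim: r => [|x r IH]; rewrite ?big_nil ?big_cons //.
by have := Z.abs_triangle (F x) (\big[Z.add/0%Z]_(i <- r) F i); lia.
Qed.

Lemma In_mem (T : eqType) (x : T) (r : seq T) : List.In x r <-> x \in r.
Proof.
elim: r => [//|y r IH] /=; rewrite inE; split.
  by case=> [->|/IH ->]; rewrite ?eqxx ?orbT.
by case/orP=> [/eqP ->|/IH]; [left|right].
Qed.

Lemma endpoints_cat n (r1 r2 : seq (mtriple n)) :
  endpoints (r1 ++ r2) = endpoints r1 ++ endpoints r2.
Proof. by rewrite /endpoints map_cat flatten_cat. Qed.

Lemma size_endpoints n (r : seq (mtriple n)) : size (endpoints r) = (2 * size r)%N.
Proof. by elim: r => [//|p r IH]; rewrite /endpoints /= -/(endpoints r) IH mulnS. Qed.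

Lemma In_endpoints {n} {r : seq (mtriple n)} {p} :
  List.In p r -> (p.1.1 \in endpoints r) /\ (p.1.2 \in endpoints r).
Proof.
elim: r => [//|q r IH] /= [->|/IH [H1 H2]]; first by rewrite !inE !eqxx /= orbT.
by rewrite !inE H1 H2 !orbT.
Qed.

Lemma big_endpoints {V : Type} {idx : V} (op : Monoid.com_law idx) {n}
    (r : seq (mtriple n)) (P : pred 'I_n) (g : 'I_n -> V) :
  uniq (endpoints r) ->
  \big[op/idx]_(w | (w \in endpoints r) && P w) g w =
  \big[op/idx]_(p <- r)
     op (if P p.1.1 then g p.1.1 else idx) (if P p.1.2 then g p.1.2 else idx).
Proof.
move=> r_uniq; rewrite big_mkcondr -big_uniq //.
rewrite /endpoints big_flatten /= big_map; apply: eq_bigr => p _.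
by rewrite !big_cons big_nil Monoid.mulm1.
Qed.

Section GreedyDual.
Variables (X : Type) (dist : X -> X -> R) (n : nat) (I : instance X n).
Hypothesis dist_metric : metric dist.
Variable sol : seq (mtriple n).

Local Notation state := (gstate n).
Local Notation d a b := (dist (pos I a) (pos I b)).
Implicit Types (s : state) (y : {set 'I_n} -> R) (S T : {set 'I_n}).

Lemma distxx a : d a a = 0.
Proof. exact: (@dist_refl _ _ dist_metric). Qed.
Lemma distC a b : d a b = d b a.
Proof. exact: (@dist_sym _ _ dist_metric). Qed.
Lemma dist_ge0 a b : 0 <= d a b.
Proof. exact: (@dist_nonneg _ _ dist_metric). Qed.
Lemma dist_triangle a b c : d a c <= d a b + d b c.
Proof. exact: (@dist_tri _ _ dist_metric). Qed.

Lemma dist_le_ecost u v : d u v <= ecost dist I u v.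
Proof. by rewrite /ecost; have := Rabs_pos (atime I u - atime I v); lra. Qed.

Lemma ecostC u v : ecost dist I u v = ecost dist I v u.
Proof. by rewrite /ecost distC Rabs_minus_sym. Qed.

Lemma dualsumC y u v : dualsum y u v = dualsum y v u.
Proof. by apply: eq_bigl => T; rewrite eq_sym. Qed.

Lemma compat_sym u v : compat I u v -> compat I v u.
Proof. by case=> uv Euv; split; [move=> E; apply: uv | lia]. Qed.

Lemma compat_neq u v : compat I u v -> u != v.
Proof. by case=> uv _; apply/eqP. Qed.

Definition dual_at y (v : 'I_n) := \big[Rplus/0]_(T : {set 'I_n} | v \in T) y T.
Definition dual_within y S (a : 'I_n) :=
  \big[Rplus/0]_(T : {set 'I_n} | (T \subset S) && (a \in T)) y T.
Definition dual_inside y S := \big[Rplus/0]_(T : {set 'I_n} | T \subset S) y T.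
Definition dual_total y := \big[Rplus/0]_(T : {set 'I_n}) y T.

Definition crossing T : nat :=
  \sum_(p <- sol) ((p.1.1 \in T) (+) (p.1.2 \in T)).
Definition dual_cut y := \big[Rplus/0]_(T : {set 'I_n}) (INR (crossing T) * y T).

Definition conn_cost s := \big[Rplus/0]_(p <- out s) d p.1.1 p.1.2.
Definition pair_wait (p : mtriple n) := (p.2 - atime I p.1.1) + (p.2 - atime I p.1.2).
Definition wait_cost s :=
  \big[Rplus/0]_(p <- out s) pair_wait p +
  \big[Rplus/0]_(w | arrived s w && free s w) (now s - atime I w).

Record invariant s : Prop := {
  act_self : forall w, arrived s w -> w \in act s w;
  act_class : forall w a, arrived s w -> a \in act s w -> act s a = act s w;
  act_arrived : forall w a, arrived s w -> a \in act s w -> arrived s a;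
  dual_ge0 : forall T, 0 <= dual s T;
  dual_support : forall T, dual s T <> 0 -> T != set0 /\
    forall w, w \in T -> arrived s w /\ T \subset act s w;
  dual_feas : forall u v, arrived s u -> arrived s v -> compat I u v ->
    dualsum (dual s) u v <= ecost dist I u v;
  dual_at_le_wait : forall v, arrived s v -> dual_at (dual s) v <= now s - atime I v;
  (* Only requests in a common active set get matched, and this bound on their
     distance survives merging along tight edges thanks to the two corrections. *)
  act_diameter : forall w a b, arrived s w -> a \in act s w -> b \in act s w ->
    d a b + dual_within (dual s) (act s w) a + dual_within (dual s) (act s w) b
    <= 2 * dual_inside (dual s) (act s w);
  conn_le_dual : conn_cost s <= 2 * INR (size (out s)) * dual_total (dual s);
  dual_le_wait : dual_total (dual s) <= wait_cost s;
  wait_le_cut : wait_cost s <= dual_cut (dual s);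
  out_uniq : uniq (endpoints (out s));
  out_arrived : forall w, w \in endpoints (out s) -> arrived s w;
  out_inside : forall p w, List.In p (out s) -> arrived s w ->
    (p.1.1 \in act s w) = (p.1.2 \in act s w);
  out_compat : forall p, List.In p (out s) -> compat I p.1.1 p.1.2;
  free_incompat : forall w a b, arrived s w -> a \in act s w -> b \in act s w ->
    free s a -> free s b -> ~ compat I a b
}.
Arguments act_self {s} _ [w]. Arguments act_class {s} _ [w a].
Arguments act_arrived {s} _ [w a]. Arguments dual_ge0 {s} _.
Arguments dual_support {s} _ [T]. Arguments dual_feas {s} _ [u v].
Arguments dual_at_le_wait {s} _ [v]. Arguments act_diameter {s} _ [w a b].
Arguments conn_le_dual {s} _. Arguments dual_le_wait {s} _.
Arguments wait_le_cut {s} _. Arguments out_uniq {s} _.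
Arguments out_arrived {s} _ [w]. Arguments out_inside {s} _ [p w].
Arguments out_compat {s} _ [p]. Arguments free_incompat {s} _ [w a b].

Lemma invariant_init : invariant init_state.
Proof.
split; rewrite /arrived /free /= ?ltn0 //; try by move=> T; lra.
- by rewrite /conn_cost big_nil /dual_total big1 //; lra.
- by rewrite /wait_cost /dual_total big_nil big1 // big_pred0_eq; lra.
- rewrite /wait_cost /dual_cut big_nil big_pred0_eq big1; first lra.
  by move=> *; ring.
Qed.

Section InvariantFacts.
Context {s : state}.
Hypothesis Hs : invariant s.

Lemma act_disjoint {u v} : arrived s u -> arrived s v -> act s u != act s v ->
  [disjoint act s u & act s v].
Proof.
move=> Hu Hv uv; apply/pred0P => a /=; apply/negbTE/negP => /andP [au av].
by move: uv; rewrite -(act_class Hs Hu au) (act_class Hs Hv av) eqxx.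
Qed.

Lemma dual_within_act {S w a} : arrived s w -> a \in act s w -> act s w \subset S ->
  dual_within (dual s) S a = dual_within (dual s) (act s w) a.
Proof.
move=> Hw aw wS; rewrite /dual_within (big_mkcond (fun T => _ && _)).
rewrite [RHS](big_mkcond (fun T => _ && _)); apply: eq_bigr => T _.
case: (Req_dec (dual s T) 0) => [->|yT]; first by do 2 case: ifP.
case: (boolP (a \in T)) => aT; rewrite ?andbF ?andbT //.
have [_ /(_ a aT) [_]] := dual_support Hs yT; rewrite (act_class Hs Hw aw) => Tw.
by rewrite Tw (subset_trans Tw wS).
Qed.

Lemma dual_inside_disjU {A B : {set 'I_n}} : [disjoint A & B] ->
  dual_inside (dual s) A + dual_inside (dual s) B <= dual_inside (dual s) (A :|: B).
Proof.
move=> AB; rewrite /dual_inside [X in X + _ <= _]big_mkcond.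
rewrite [X in _ + X <= _]big_mkcond -big_split [X in _ <= X]big_mkcond.
apply: Rsum_le => T _ /=; have y0 := dual_ge0 Hs T.
case: (Req_dec (dual s T) 0) => [->|yT]; first by do 3 case: ifP; lra.
have [/set0Pn [t tT] _] := dual_support Hs yT.
case: (boolP (T \subset A)) => TA.
  rewrite (subset_trans TA (subsetUl _ _)); case: ifP; last lra.
  by move/subsetP/(_ t tT); rewrite (disjointFr AB) //; apply: (subsetP TA).
case: (boolP (T \subset B)) => TB; last by case: ifP; lra.
by rewrite (subset_trans TB (subsetUr _ _)); lra.
Qed.

Lemma dualsum_act_neq {u v} : arrived s u -> arrived s v -> act s u != act s v ->
  dualsum (dual s) u v =
  dual_within (dual s) (act s u) u + dual_within (dual s) (act s v) v.
Proof.
move=> Hu Hv uv; have AB := act_disjoint Hu Hv uv.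
rewrite /dualsum /dual_within [LHS]big_mkcond [X in _ = X + _]big_mkcond.
rewrite [X in _ = _ + X]big_mkcond -big_split; apply: eq_bigr => T _ /=.
case: (Req_dec (dual s T) 0) => [->|yT]; first by do 3 case: ifP; lra.
have [_ Tact] := dual_support Hs yT.
case: (boolP (u \in T)) => uT.
  have [_ Tu] := Tact u uT.
  have vT : v \notin T.
    apply/negP => /(subsetP Tu); rewrite (disjointFl AB) //.
    exact: (act_self Hs Hv).
  have TB : (T \subset act s v) = false.
    apply/negbTE/negP => /subsetP /(_ u uT); rewrite (disjointFr AB) //.
    exact: (act_self Hs Hu).
  by rewrite (negbTE vT) Tu TB /=; lra.
case: (boolP (v \in T)) => vT /=; last by rewrite !andbF; lra.
by have [_ ->] := Tact v vT; rewrite andbF /=; lra.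
Qed.

Lemma dual_within_ge0 S a : 0 <= dual_within (dual s) S a.
Proof. by apply: Rsum_ge0 => T _; apply: dual_ge0. Qed.

Lemma dual_inside_ge0 S : 0 <= dual_inside (dual s) S.
Proof. by apply: Rsum_ge0 => T _; apply: dual_ge0. Qed.

Lemma dual_inside_le_total S : dual_inside (dual s) S <= dual_total (dual s).
Proof. by apply: Rsum_le_widen => [T|T _]; [apply: dual_ge0 | left]. Qed.

End InvariantFacts.

Section Arrival.
Variables (s : state) (u : 'I_n).
Hypothesis Hs : invariant s.
Hypothesis u_next : nat_of_ord u = narr s.
Hypothesis u_now : atime I u = now s.
Local Notation s' := (arrive s u).

Lemma arrival_new : ~~ arrived s u.
Proof. by rewrite /arrived u_next ltnn. Qed.

Lemma arrived_arrive w : arrived s' w = arrived s w || (w == u).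
Proof.
rewrite /arrived /= ltnS leq_eqVlt orbC; congr (_ || _).
by rewrite -u_next; apply/eqP/eqP => [E|->//]; apply: val_inj.
Qed.

Lemma arrived_neq_new {w} : arrived s w -> w != u.
Proof. by move=> Hw; apply/eqP => E; move: arrival_new; rewrite -E Hw. Qed.

Lemma dual_new T : u \in T -> dual s T = 0.
Proof.
move=> uT; case: (Req_dec (dual s T) 0) => // /(dual_support Hs) [_ /(_ u uT) [Hu _]].
by move: arrival_new; rewrite Hu.
Qed.

Lemma dual_arrive : dual s' = dual s.
Proof.
apply: FunctionalExtensionality.functional_extensionality => T /=.
by case: ifP => // /dual_new ->.
Qed.

Lemma wait_arrive : wait_cost s' = wait_cost s.
Proof.
rewrite /wait_cost /=; congr (_ + _); rewrite (big_mkcond (fun w => _ && _)).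
rewrite [RHS](big_mkcond (fun w => _ && _)); apply: eq_bigr => w _.
rewrite arrived_arrive; case: (eqVneq w u) => [->|_]; last by rewrite orbF.
by rewrite (negbTE arrival_new) /= u_now; case: ifP => //; lra.
Qed.

(* Sets containing [u] carry no dual yet, so the edge constraint of {u, v} only
   sees sets containing [v], whose duals grew only while [v] was waiting. *)
Lemma dual_feas_new v : arrived s v -> compat I u v ->
  dualsum (dual s) u v <= ecost dist I u v.
Proof.
move=> Hv _; apply: (Rle_trans _ (dual_at (dual s) v)).
  apply: Rsum_le_widen => [T|T]; first exact: (dual_ge0 Hs).
  case: (boolP (u \in T)) => uT; last by move=> /= /negbNE ->; left.
  by move=> _; right; apply: dual_new.
apply: (Rle_trans _ _ _ (dual_at_le_wait Hs Hv)); rewrite -u_now /ecost.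
by have := dist_ge0 u v; have := Rle_abs (atime I u - atime I v); lra.
Qed.

Lemma dual_feas_arrive a b : arrived s' a -> arrived s' b -> compat I a b ->
  dualsum (dual s) a b <= ecost dist I a b.
Proof.
rewrite !arrived_arrive => /orP [Ha|/eqP ->] /orP [Hb|/eqP ->].
- exact: (dual_feas Hs).
- by move=> /compat_sym ba; rewrite dualsumC ecostC; apply: dual_feas_new.
- exact: dual_feas_new.
- by move=> /compat_neq; rewrite eqxx.
Qed.

Lemma act_diameter_new a b : a \in [set u] -> b \in [set u] ->
  d a b + dual_within (dual s) [set u] a + dual_within (dual s) [set u] b
  <= 2 * dual_inside (dual s) [set u].
Proof.
have dual_single T : T \subset [set u] -> dual s T = 0.
  move=> Tu; case: (Req_dec (dual s T) 0) => // /(dual_support Hs) [/set0Pn [t tT] _].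
  by apply: dual_new; move/subsetP: Tu => /(_ t tT); rewrite inE => /eqP <-.
rewrite !inE => /eqP -> /eqP ->; rewrite distxx /dual_within /dual_inside !big1;
  first lra; by move=> T; try case/andP; move/dual_single.
Qed.

Lemma out_avoids_new p : List.In p (out s) ->
  (p.1.1 \in [set u]) = (p.1.2 \in [set u]).
Proof.
move=> Hp; have [/(out_arrived Hs)/arrived_neq_new/negbTE p1
               /(out_arrived Hs)/arrived_neq_new/negbTE p2] := In_endpoints Hp.
by rewrite !inE p1 p2.
Qed.

Lemma invariant_arrive : invariant s'.
Proof.
have Ha := arrived_arrive.
split; rewrite ?dual_arrive ?wait_arrive.
- move=> w; rewrite Ha /=; case: eqVneq => [->|_] /=; rewrite ?orbF ?inE //.
  exact: (act_self Hs).
- move=> w a; rewrite Ha /=; case: (eqVneq w u) => [->|_] /=; rewrite ?orbF.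
    by rewrite inE => _ /eqP ->; rewrite eqxx.
  move=> Hw aw; have /arrived_neq_new/negbTE -> := act_arrived Hs Hw aw.
  exact: (act_class Hs Hw aw).
- move=> w a; rewrite !Ha /=; case: (eqVneq w u) => [->|_] /=; rewrite ?orbF.
    by rewrite inE => _ ->; rewrite orbT.
  by move=> Hw aw; rewrite (act_arrived Hs Hw aw).
- exact: (dual_ge0 Hs).
- move=> T /(dual_support Hs) [T0 HT]; split=> // w /HT [Hw Tw].
  by rewrite Ha Hw /= (negbTE (arrived_neq_new Hw)).
- exact: dual_feas_arrive.
- move=> v; rewrite Ha /=; case/orP=> [Hv|/eqP ->]; first exact: (dual_at_le_wait Hs).
  rewrite /dual_at big1 ?u_now; first lra.
  by move=> T; apply: dual_new.
- move=> w a b; rewrite Ha /=; case: (eqVneq w u) => _ /=; rewrite ?orbF.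
    by move=> _; apply: act_diameter_new.
  exact: (act_diameter Hs).
- exact: (conn_le_dual Hs).
- exact: (dual_le_wait Hs).
- exact: (wait_le_cut Hs).
- exact: (out_uniq Hs).
- by move=> w /(out_arrived Hs) Hw; rewrite Ha Hw.
- move=> p w Hp; rewrite Ha /=; case: (eqVneq w u) => _ /=; rewrite ?orbF.
    by move=> _; apply: out_avoids_new.
  exact: (out_inside Hs).
- exact: (out_compat Hs).
- move=> w a b; rewrite Ha /=; case: (eqVneq w u) => [->|_] /=; rewrite ?orbF;
    last exact: (free_incompat Hs).
  by rewrite !inE => _ /eqP -> /eqP -> _ _ /compat_neq; rewrite eqxx.
Qed.

End Arrival.

Section Merge.
Variables (s : state) (u v : 'I_n) (ps : seq ('I_n * 'I_n)).
Hypothesis Hs : invariant s.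
Hypothesis Hu : arrived s u.
Hypothesis Hv : arrived s v.
Hypothesis uv_apart : act s u != act s v.
Hypothesis uv_tight : dualsum (dual s) u v = ecost dist I u v.
Hypothesis ps_ok : merge_matching_ok I s u v ps.

Local Notation y := (dual s).
Local Notation A := (act s u).
Local Notation B := (act s v).
Local Notation S := (act s u :|: act s v).
Local Notation s' := (merged s u v ps).
Local Notation matched := (flatten [seq [:: p.1; p.2] | p <- ps]).
Local Notation new_pairs := [seq (p.1, p.2, now s) | p <- ps].

Lemma arrived_merged {a} : a \in S -> arrived s a.
Proof.
by rewrite inE => /orP [aA|aB]; [apply: (act_arrived Hs Hu aA) | apply: (act_arrived Hs Hv aB)].
Qed.

Lemma act_sub_merged {a} : a \in S -> act s a \subset S.
Proof.
rewrite inE => /orP [aA|aB]; first by rewrite (act_class Hs Hu aA) subsetUl.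
by rewrite (act_class Hs Hv aB) subsetUr.
Qed.

Lemma act_outside_merged {w x} : arrived s w -> w \notin S -> x \in act s w -> x \notin S.
Proof.
move=> Hw wS xw; apply: contra wS => /act_sub_merged /subsetP; apply.
by rewrite (act_class Hs Hw xw) (act_self Hs Hw).
Qed.

(* The tight edge pays exactly for the two corrections at its endpoints. *)
Lemma merged_diameter_across {a b} : a \in A -> b \in B ->
  d a b + dual_within y S a + dual_within y S b <= 2 * dual_inside y S.
Proof.
move=> aA bB.
rewrite (dual_within_act Hs Hu aA (subsetUl _ _)).
rewrite (dual_within_act Hs Hv bB (subsetUr _ _)).
have Da := act_diameter Hs Hu aA (act_self Hs Hu).
have Db := act_diameter Hs Hv (act_self Hs Hv) bB.
have Duv := dist_le_ecost u v.
rewrite -uv_tight (dualsum_act_neq Hs Hu Hv uv_apart) in Duv.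
have := dual_inside_disjU Hs (act_disjoint Hs Hu Hv uv_apart).
have := dist_triangle a u b; have := dist_triangle u v b; lra.
Qed.

Lemma merged_diameter {a b} : a \in S -> b \in S ->
  d a b + dual_within y S a + dual_within y S b <= 2 * dual_inside y S.
Proof.
have AB := dual_inside_disjU Hs (act_disjoint Hs Hu Hv uv_apart).
rewrite !inE => /orP [aA|aB] /orP [bA|bB].
- rewrite !(dual_within_act Hs Hu _ (subsetUl _ _)) //.
  have := act_diameter Hs Hu aA bA; have := dual_inside_ge0 Hs B; lra.
- exact: merged_diameter_across.
- by rewrite distC; have := merged_diameter_across bA aB; lra.
- rewrite !(dual_within_act Hs Hv _ (subsetUr _ _)) //.
  have := act_diameter Hs Hv aB bB; have := dual_inside_ge0 Hs A; lra.
Qed.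

Lemma endpoints_new_pairs : endpoints new_pairs = matched.
Proof. by rewrite /endpoints; elim: ps => [|q r /= ->]. Qed.

Lemma free_merged w : free s' w = free s w && (w \notin matched).
Proof. by rewrite /free /= endpoints_cat mem_cat negb_or endpoints_new_pairs. Qed.

Lemma merged_pair p : p \in ps ->
  [/\ p.1 \in S, p.2 \in S, free s p.1, free s p.2 & compat I p.1 p.2].
Proof.
case: ps_ok => _ [ps_all _] /In_mem p_ps.
by move/List.Forall_forall: ps_all; apply.
Qed.

Lemma matched_free {w} : w \in matched -> (w \in S) && free s w.
Proof.
case/flatten_mapP => p /merged_pair [p1S p2S p1f p2f _].
by rewrite mem_seq2 => /orP [] /eqP ->; apply/andP.
Qed.

Lemma wait_merged : wait_cost s' = wait_cost s.
Proof.
rewrite /wait_cost /= big_cat /= big_map Rplus_assoc; congr (_ + _).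
rewrite [RHS](bigID (fun w => w \in matched)) /=; congr (_ + _); last first.
  by apply: eq_bigl => w; rewrite free_merged andbA.
rewrite [RHS](eq_bigl (fun w => (w \in endpoints new_pairs) && true)); last first.
  move=> w; rewrite endpoints_new_pairs andbT.
  apply/idP/idP => [/andP [] //|wm].
  by case/andP: (matched_free wm) => /arrived_merged -> ->; rewrite wm.
rewrite big_endpoints; last by rewrite endpoints_new_pairs; case: ps_ok.
by rewrite big_map; apply: eq_bigr.
Qed.

Lemma conn_merged : conn_cost s' <= 2 * INR (size (out s')) * dual_total y.
Proof.
have pair_dist q : q \in ps -> d q.1 q.2 <= 2 * dual_total y.
  case/merged_pair => q1S q2S _ _ _; have := merged_diameter q1S q2S.
  have := dual_within_ge0 Hs S q.1; have := dual_within_ge0 Hs S q.2.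
  have := dual_inside_le_total Hs S; lra.
rewrite /conn_cost /= big_cat big_map /= size_cat size_map plus_INR.
have : \big[Rplus/0]_(q <- ps) d q.1 q.2 <= INR (size ps) * (2 * dual_total y).
  rewrite -Rsum_const big_seq_cond [X in _ <= X]big_seq_cond.
  by apply: Rsum_le => q /andP [/pair_dist].
have := conn_le_dual Hs; rewrite /conn_cost; lra.
Qed.

Lemma new_pair_inside q w : q \in ps -> arrived s w ->
  (q.1 \in act s' w) = (q.2 \in act s' w).
Proof.
move=> /merged_pair [q1S q2S _ _ _] Hw /=; case: ifP => [_|/negbT wS].
  by rewrite q1S q2S.
have outside x : x \in S -> (x \in act s w) = false.
  by move=> xS; apply/negbTE; apply: contraL xS; apply: act_outside_merged Hw wS.
by rewrite (outside _ q1S) (outside _ q2S).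
Qed.

Lemma invariant_merge : invariant s'.
Proof.
split=> /=.
- by move=> w Hw; case: ifP => // _; apply: (act_self Hs Hw).
- move=> w a Hw; case: ifP => [_ -> //|/negbT wS aw].
  by rewrite (negbTE (act_outside_merged Hw wS aw)); apply: (act_class Hs Hw aw).
- by move=> w a Hw; case: ifP => [_ /arrived_merged|_]; last apply: (act_arrived Hs Hw).
- exact: (dual_ge0 Hs).
- move=> T /(dual_support Hs) [T0 HT]; split=> // w /HT [Hw Tw]; split=> //.
  by case: ifP => // wS; apply: subset_trans Tw (act_sub_merged wS).
- exact: (dual_feas Hs).
- exact: (dual_at_le_wait Hs).
- by move=> w a b Hw; case: ifP => _; [apply: merged_diameter | apply: (act_diameter Hs Hw)].
- exact: conn_merged.
- by rewrite wait_merged; apply: (dual_le_wait Hs).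
- by rewrite wait_merged; apply: (wait_le_cut Hs).
- rewrite endpoints_cat endpoints_new_pairs cat_uniq (out_uniq Hs) /=.
  case: ps_ok => -> _; rewrite andbT; apply/hasPn => w /matched_free /andP [_].
  by rewrite /free.
- move=> w; rewrite endpoints_cat mem_cat endpoints_new_pairs.
  by case/orP => [/(out_arrived Hs) // | /matched_free /andP [/arrived_merged]].
- move=> p w p_out Hw; case: (List.in_app_or _ _ _ p_out) => [p_old|p_new].
    case: ifP => wS; last exact: (out_inside Hs p_old Hw).
    by rewrite !inE (out_inside Hs p_old Hu) (out_inside Hs p_old Hv).
  by move/List.in_map_iff: p_new => [q [<- /In_mem q_ps]]; apply: (new_pair_inside q w q_ps Hw).
- move=> p p_out; case: (List.in_app_or _ _ _ p_out) => [|p_new]; first exact: (out_compat Hs).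
  by move/List.in_map_iff: p_new => [q [<- /In_mem /merged_pair []]].
- move=> w a b Hw; case: ifP => [_|_ aw bw]; first by case: ps_ok => _ [_]; apply.
  rewrite !free_merged => /andP [fa _] /andP [fb _].
  exact: (free_incompat Hs Hw aw bw fa fb).
Qed.

End Merge.

Hypothesis sol_ok : offline_solution I sol.

Lemma sol_uniq : uniq (endpoints sol).
Proof. by case: sol_ok. Qed.

Lemma sol_compat {p} : List.In p sol -> compat I p.1.1 p.1.2.
Proof.
case: sol_ok => _ [_ /List.Forall_forall sol_all] /sol_all.
by case: p => [[a b] t] [].
Qed.

Lemma Zsum_sol (g : 'I_n -> Z) T :
  \big[Z.add/0%Z]_(w in T) g w =
  \big[Z.add/0%Z]_(p <- sol)
    ((if p.1.1 \in T then g p.1.1 else 0) + (if p.1.2 \in T then g p.1.2 else 0))%Z.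
Proof.
rewrite -(big_endpoints _ _ (fun w => w \in T) _ sol_uniq); apply: eq_bigl => w.
by case: sol_ok => _ [-> _].
Qed.

Lemma crossing_Z T : Z.of_nat (crossing T) =
  \big[Z.add/0%Z]_(p <- sol) (if (p.1.1 \in T) (+) (p.1.2 \in T) then 1 else 0)%Z.
Proof. by rewrite /crossing Z_of_nat_sum; apply: eq_bigr => p _; case: addb. Qed.

Lemma card_crossing_parity T : exists k,
  (\big[Z.add/0%Z]_(w in T) 1 = 2 * k + Z.of_nat (crossing T))%Z.
Proof.
exists (\big[Z.add/0%Z]_(p <- sol) (if (p.1.1 \in T) && (p.1.2 \in T) then 1 else 0))%Z.
rewrite Zsum_sol crossing_Z big_distrr -big_split; apply: eq_bigr => p _.
by do 2 case: (_ \in T).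
Qed.

Lemma sgn_sum_le_crossing T : (forall i, sgn I i = 1%Z \/ sgn I i = (-1)%Z) ->
  (Z.abs (\big[Z.add/0%Z]_(w in T) sgn I w) <= Z.of_nat (crossing T))%Z.
Proof.
move=> sgn1; rewrite Zsum_sol crossing_Z.
apply: Z.le_trans (Zabs_sum _ _ _) _.
apply: (big_In_ind2 Z.le) => [|*|p /sol_compat [_ sgn_p]]; try lia.
by have := sgn1 p.1.1; have := sgn1 p.1.2; do 2 case: (_ \in T) => /=; lia.
Qed.

Section Surplus.
Context {s : state} {w0 : 'I_n}.
Hypothesis Hs : invariant s.
Hypothesis Hw0 : arrived s w0.
Local Notation T := (act s w0).
Local Notation nfree := (\sum_(w | (w \in T) && free s w) 1)%N.

Lemma nfree_Z : Z.of_nat nfree = \big[Z.add/0%Z]_(w | (w \in T) && free s w) 1%Z.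
Proof. exact: Z_of_nat_sum. Qed.

Lemma Zsum_act (g : 'I_n -> Z) :
  \big[Z.add/0%Z]_(w in T) g w =
  (\big[Z.add/0%Z]_(w | (w \in T) && free s w) g w +
   \big[Z.add/0%Z]_(p <- out s) (if p.1.1 \in T then g p.1.1 + g p.1.2 else 0))%Z.
Proof.
rewrite (bigID (free s)) /=; congr (_ + _)%Z.
rewrite (eq_bigl (fun w => (w \in endpoints (out s)) && (w \in T))); last first.
  by move=> w; rewrite /free negbK andbC.
rewrite big_endpoints ?(out_uniq Hs) //.
apply: (big_In_ind2 eq) => // [*|p p_out]; first by congr Z.add.
by rewrite (out_inside Hs p_out Hw0); case: (_ \in T).
Qed.

Lemma nfree_le1_unsigned : (forall i, sgn I i = 0%Z) -> (nfree <= 1)%N.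
Proof.
move=> sgn0; rewrite sum1_card; apply/card_le1_eqP => a b.
move=> /andP [aT af] /andP [bT bf]; apply/eqP/negPn/negP => ab.
apply: (free_incompat Hs Hw0 aT bT af bf); split; first by move=> E; move: ab; rewrite E eqxx.
by rewrite !sgn0.
Qed.

Lemma nfree_le_crossing_unsigned : (forall i, sgn I i = 0%Z) ->
  (nfree <= crossing T)%N.
Proof.
move=> sgn0; have le1 := nfree_le1_unsigned sgn0.
have [k Ek] := card_crossing_parity T.
rewrite Zsum_act -nfree_Z in Ek.
suff [j Ej] : exists j, \big[Z.add/0%Z]_(p <- out s)
    (if p.1.1 \in T then 1 + 1 else 0)%Z = (2 * j)%Z by move: Ek; rewrite Ej; lia.
exists (\big[Z.add/0%Z]_(p <- out s) (if p.1.1 \in T then 1 else 0))%Z.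
by rewrite big_distrr; apply: eq_bigr => p _; case: (_ \in T).
Qed.

Lemma nfree_le_crossing_signed : (forall i, sgn I i = 1%Z \/ sgn I i = (-1)%Z) ->
  (nfree <= crossing T)%N.
Proof.
have out_cancel : \big[Z.add/0%Z]_(p <- out s)
    (if p.1.1 \in T then sgn I p.1.1 + sgn I p.1.2 else 0)%Z = 0%Z.
  transitivity (\big[Z.add/0%Z]_(p <- out s) 0%Z); last exact: big1_eq.
  apply: (big_In_ind2 eq) => // [*|p]; first by congr Z.add.
  move=> /[dup] /(out_compat Hs) [_ Ep] /(out_inside Hs)/(_ Hw0) ->.
  by case: (_ \in T); lia.
move=> sgn1; have := sgn_sum_le_crossing T sgn1.
rewrite Zsum_act out_cancel Z.add_0_r.
case: (pickP (fun w => (w \in T) && free s w)) => [w1 /andP [w1T w1f]|nofree];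
  last by move=> _; rewrite (big_pred0 _ _ _ _ nofree).
have -> : \big[Z.add/0%Z]_(w | (w \in T) && free s w) sgn I w =
           (sgn I w1 * Z.of_nat nfree)%Z.
  rewrite nfree_Z big_distrr; apply: eq_bigr => w /andP [wT wf] /=.
  rewrite Z.mul_1_r; case: (eqVneq w w1) => [-> //|ww1].
  have := free_incompat Hs Hw0 wT w1T wf w1f.
  case: (sgn1 w) => Ew; case: (sgn1 w1) => Ew1; rewrite Ew Ew1 // => nc;
    by exfalso; apply: nc; split; [apply/eqP | lia].
by case: (sgn1 w1) => ->; lia.
Qed.

End Surplus.

Hypothesis sgn_shape : (forall i, sgn I i = 0%Z) \/
                       (forall i, sgn I i = 1%Z \/ sgn I i = (-1)%Z).

Lemma free_le_crossing s w0 : invariant s -> arrived s w0 ->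
  \big[Rplus/0]_(w | (w \in act s w0) && free s w) 1 <= INR (crossing (act s w0)).
Proof.
move=> Hs Hw0; rewrite -[X in X <= _](INR_sum _ _ _ (fun=> 1%N)).
apply/le_INR/leP; case: sgn_shape.
- exact: nfree_le_crossing_unsigned.
- exact: nfree_le_crossing_signed.
Qed.

Section Growth.
Variables (s : state) (t : R).
Hypothesis Hs : invariant s.
Hypothesis t_pos : 0 < t.
Hypothesis grown_feas : dual_feasible dist I (grown s t).

Local Notation y := (dual s).
Local Notation s' := (grown s t).

Lemma growing_mem {T a} : growing s T -> a \in T -> arrived s a /\ act s a = T.
Proof.
case/andP => /existsP [w0 /andP [Hw0 /eqP <-]] _ aT.
by split; [apply: (act_arrived Hs Hw0 aT) | apply: (act_class Hs Hw0 aT)].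
Qed.

Lemma growing_nonempty {T} : growing s T -> exists w0, arrived s w0 /\ act s w0 = T.
Proof. by case/andP => /existsP [w0 /andP [Hw0 /eqP <-]] _; exists w0. Qed.

Lemma grown_sum (P : pred {set 'I_n}) (c : {set 'I_n} -> R) :
  \big[Rplus/0]_(T : {set 'I_n} | P T) (c T * dual s' T) =
  \big[Rplus/0]_(T : {set 'I_n} | P T) (c T * y T) +
  t * \big[Rplus/0]_(T : {set 'I_n} | P T && growing s T) c T.
Proof.
rewrite big_distrr big_mkcondr -big_split; apply: eq_bigr => T _ /=.
by case: ifP => _; ring.
Qed.

Lemma grown_sum1 (P : pred {set 'I_n}) :
  \big[Rplus/0]_(T : {set 'I_n} | P T) dual s' T =
  \big[Rplus/0]_(T : {set 'I_n} | P T) y T + t * \big[Rplus/0]_(T : {set 'I_n} | P T && growing s T) 1.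
Proof.
rewrite big_distrr big_mkcondr -big_split; apply: eq_bigr => T _ /=.
by case: ifP => _; ring.
Qed.

Lemma grown_dual_at (v : 'I_n) : dual_at (dual s') v =
  dual_at y v + t * \big[Rplus/0]_(T : {set 'I_n} | (v \in T) && growing s T) 1.
Proof. exact: grown_sum1. Qed.

Lemma grown_dual_within S (a : 'I_n) : dual_within (dual s') S a = dual_within y S a +
  t * \big[Rplus/0]_(T : {set 'I_n} | ((T \subset S) && (a \in T)) && growing s T) 1.
Proof. exact: grown_sum1. Qed.

Lemma grown_dual_inside S : dual_inside (dual s') S = dual_inside y S +
  t * \big[Rplus/0]_(T : {set 'I_n} | (T \subset S) && growing s T) 1.
Proof. exact: grown_sum1. Qed.

Lemma grown_dual_total : dual_total (dual s') =
  dual_total y + t * \big[Rplus/0]_(T : {set 'I_n} | growing s T) 1.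
Proof. exact: (grown_sum1 xpredT). Qed.

Lemma grown_dual_cut : dual_cut (dual s') =
  dual_cut y + t * \big[Rplus/0]_(T : {set 'I_n} | growing s T) INR (crossing T).
Proof. exact: (grown_sum xpredT). Qed.

Lemma wait_grown :
  wait_cost s' = wait_cost s + t * \big[Rplus/0]_(w | arrived s w && free s w) 1.
Proof.
rewrite /wait_cost /= Rplus_assoc; congr (_ + _).
by rewrite big_distrr -big_split; apply: eq_bigr => w _ /=; ring.
Qed.

Lemma free_by_growing :
  \big[Rplus/0]_(w | arrived s w && free s w) 1 =
  \big[Rplus/0]_(T : {set 'I_n} | growing s T) \big[Rplus/0]_(w | (w \in T) && free s w) 1.
Proof.
rewrite (partition_big (act s) (growing s)) /=; last first.
  move=> w /andP [Hw wf]; apply/andP; split.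
    by apply/existsP; exists w; rewrite Hw eqxx.
  by apply/existsP; exists w; rewrite (act_self Hs Hw).
apply: eq_bigr => T HT; apply: eq_bigl => w.
apply/idP/idP => [/andP [/andP [Hw wf] /eqP <-]|/andP [wT wf]].
  by rewrite (act_self Hs Hw).
by case: (growing_mem HT wT) => -> ->; rewrite wf eqxx.
Qed.

Lemma growing_free_ge1 T : growing s T ->
  1 <= \big[Rplus/0]_(w | (w \in T) && free s w) 1.
Proof.
case/andP => _ /existsP [w /andP [wT wf]].
rewrite (bigD1 w) /=; last by rewrite wT wf.
rewrite -[X in X <= _]Rplus_0_r; apply: Rplus_le_compat_l.
by apply: Rsum_ge0 => *; lra.
Qed.

Lemma growing_free_le_crossing T : growing s T ->
  \big[Rplus/0]_(w | (w \in T) && free s w) 1 <= INR (crossing T).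
Proof. by case/growing_nonempty => w0 [Hw0 <-]; apply: free_le_crossing. Qed.

Lemma grown_dual_feas u v : arrived s u -> arrived s v -> compat I u v ->
  dualsum (dual s') u v <= ecost dist I u v.
Proof.
move=> Hu Hv uv; case: (eqVneq (act s u) (act s v)) => Euv; last exact: grown_feas.
rewrite /dualsum grown_sum1 [X in t * X]big_pred0 => [|T].
  by rewrite Rmult_0_r Rplus_0_r; apply: (dual_feas Hs).
apply/negbTE/negP => /andP [sep HT].
case: (boolP (u \in T)) sep => uT.
  by case: (growing_mem HT uT) => _ <-; rewrite Euv (act_self Hs Hv).
case: (boolP (v \in T)) => vT //.
by case: (growing_mem HT vT) => _ E; move: uT; rewrite -E -Euv (act_self Hs Hu).
Qed.

Lemma grown_dual_at_le_wait v : arrived s v ->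
  dual_at (dual s') v <= now s + t - atime I v.
Proof.
move=> Hv; rewrite grown_dual_at.
have : \big[Rplus/0]_(T : {set 'I_n} | (v \in T) && growing s T) 1 <= 1.
  apply: (Rsum1_le1 _ _ (act s v)) => T /andP [vT HT].
  by case: (growing_mem HT vT).
move/(Rmult_le_compat_l _ _ _ (Rlt_le _ _ t_pos)).
by have := dual_at_le_wait Hs Hv; lra.
Qed.

Lemma grown_act_diameter w a b : arrived s w -> a \in act s w -> b \in act s w ->
  d a b + dual_within (dual s') (act s w) a + dual_within (dual s') (act s w) b
  <= 2 * dual_inside (dual s') (act s w).
Proof.
move=> Hw aw bw; rewrite !grown_dual_within grown_dual_inside.
have le_all (c : 'I_n) :
    \big[Rplus/0]_(T : {set 'I_n} | ((T \subset act s w) && (c \in T)) && growing s T) 1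
    <= \big[Rplus/0]_(T : {set 'I_n} | (T \subset act s w) && growing s T) 1.
  by apply: Rsum_le_widen => [T|T /andP [/andP [-> _] ->]]; [lra | left].
have := Rmult_le_compat_l _ _ _ (Rlt_le _ _ t_pos) (le_all a).
have := Rmult_le_compat_l _ _ _ (Rlt_le _ _ t_pos) (le_all b).
have := act_diameter Hs Hw aw bw; lra.
Qed.

Lemma grown_conn_le_dual :
  conn_cost s <= 2 * INR (size (out s)) * dual_total (dual s').
Proof.
apply: (Rle_trans _ _ _ (conn_le_dual Hs)).
apply: Rmult_le_compat_l; first by have := pos_INR (size (out s)); lra.
rewrite grown_dual_total -[X in X <= _]Rplus_0_r; apply: Rplus_le_compat_l.
by apply: Rmult_le_pos; [lra | apply: Rsum_ge0 => *; lra].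
Qed.

Lemma grown_dual_le_wait : dual_total (dual s') <= wait_cost s'.
Proof.
rewrite wait_grown grown_dual_total free_by_growing.
have : \big[Rplus/0]_(T : {set 'I_n} | growing s T) 1 <=
       \big[Rplus/0]_(T : {set 'I_n} | growing s T)
          \big[Rplus/0]_(w | (w \in T) && free s w) 1.
  by apply: Rsum_le => T; apply: growing_free_ge1.
move/(Rmult_le_compat_l _ _ _ (Rlt_le _ _ t_pos)).
by have := dual_le_wait Hs; lra.
Qed.

Lemma grown_wait_le_cut : wait_cost s' <= dual_cut (dual s').
Proof.
rewrite wait_grown grown_dual_cut free_by_growing.
have : \big[Rplus/0]_(T : {set 'I_n} | growing s T)
          \big[Rplus/0]_(w | (w \in T) && free s w) 1 <=
       \big[Rplus/0]_(T : {set 'I_n} | growing s T) INR (crossing T).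
  by apply: Rsum_le => T; apply: growing_free_le_crossing.
move/(Rmult_le_compat_l _ _ _ (Rlt_le _ _ t_pos)).
by have := wait_le_cut Hs; lra.
Qed.

Lemma invariant_grow : invariant s'.
Proof.
split=> //.
- exact: (act_self Hs).
- exact: (act_class Hs).
- exact: (act_arrived Hs).
- by move=> T /=; have := dual_ge0 Hs T; case: ifP => _; lra.
- move=> T /=; case: ifP => HT; last exact: (dual_support Hs).
  move=> _; have [w0 [Hw0 E]] := growing_nonempty HT; split.
    by apply/set0Pn; exists w0; rewrite -E (act_self Hs Hw0).
  by move=> w wT; case: (growing_mem HT wT) => Hw ->.
- exact: grown_dual_feas.
- exact: grown_dual_at_le_wait.
- exact: grown_act_diameter.
- exact: grown_conn_le_dual.
- exact: grown_dual_le_wait.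
- exact: grown_wait_le_cut.
- exact: (out_uniq Hs).
- exact: (out_arrived Hs).
- exact: (out_inside Hs).
- exact: (out_compat Hs).
- exact: (free_incompat Hs).
Qed.

End Growth.

Lemma invariant_reach s : gd_reach dist I s -> invariant s.
Proof.
elim=> [|{}s s1 _ Hs step]; first exact: invariant_init.
case: step Hs => [? ? ? _ _ ?|? ? ? ?|? ? ? ? ? ? _ ? ? ?] Hs.
- exact: invariant_grow.
- exact: invariant_arrive.
- exact: invariant_merge.
Qed.

Lemma total_costE (r : seq (mtriple n)) :
  total_cost dist I r =
  \big[Rplus/0]_(p <- r) d p.1.1 p.1.2 + \big[Rplus/0]_(p <- r) pair_wait p.
Proof.
elim: r => [|[[a b] t] r IH]; first by rewrite /total_cost /= !big_nil; ring.
by rewrite /total_cost /= -/(total_cost dist I r) IH !big_cons /pair_wait /=; ring.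
Qed.

Lemma dual_cut_sol y :
  dual_cut y = \big[Rplus/0]_(p <- sol) dualsum y p.1.1 p.1.2.
Proof.
rewrite /dual_cut (eq_bigr (fun T => \big[Rplus/0]_(p <- sol)
   (if (p.1.1 \in T) (+) (p.1.2 \in T) then y T else 0))); last first.
  move=> T _; rewrite /crossing INR_sum Rmult_comm big_distrr /=.
  by apply: eq_bigr => p _; case: addb => /=; ring.
rewrite exchange_big /=; apply: eq_bigr => p _.
by rewrite /dualsum [RHS]big_mkcond; apply: eq_bigr => T _; do 2 case: (_ \in T).
Qed.

Lemma dual_cut_le_opt {s} : invariant s -> (forall w, arrived s w) ->
  dual_cut (dual s) <= total_cost dist I sol.
Proof.
move=> Hs all_arrived; rewrite dual_cut_sol total_costE -big_split.
apply: (big_In_ind2 Rle) => [|*|p p_sol]; try lra.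
apply: Rle_trans (dual_feas Hs (all_arrived _) (all_arrived _) (sol_compat p_sol)) _.
case: sol_ok => _ [_ /List.Forall_forall /(_ p p_sol)].
case: p {p_sol} => [[a b] t] /= [_ [ta tb]].
by rewrite /ecost /pair_wait /=; apply: Rplus_le_compat_l; apply: Rabs_le; lra.
Qed.

Lemma gd_cost_le s : invariant s -> gd_done s ->
  total_cost dist I (out s) <= INR (n + 1) * total_cost dist I sol.
Proof.
move=> Hs [all_arrived no_free].
have Harr w : arrived s w by rewrite /arrived all_arrived ltn_ord.
have wait_out : wait_cost s = \big[Rplus/0]_(p <- out s) pair_wait p.
  rewrite /wait_cost [X in _ + X]big_pred0 => [|w]; first by rewrite Rplus_0_r.
  by rewrite (negbTE (no_free w)) andbF.
have size_out : INR (2 * size (out s)) = INR n.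
  rewrite -size_endpoints; congr INR.
  transitivity (size (enum 'I_n)); last exact: size_enum_ord.
  apply: perm_size; apply: uniq_perm; [exact: (out_uniq Hs) | exact: enum_uniq|].
  by move=> w; rewrite mem_enum; move: (no_free w); rewrite /free negbK => ->.
have conn_le : conn_cost s <= INR n * dual_total (dual s).
  by rewrite -size_out mult_INR; have := conn_le_dual Hs; simpl; lra.
have := dual_le_wait Hs; have := wait_le_cut Hs; have := dual_cut_le_opt Hs Harr.
have := pos_INR n; rewrite (total_costE (out s)) -/(conn_cost s) -wait_out plus_INR /=.
by nra.
Qed.

End GreedyDual.

Arguments invariant_reach {X dist n I} _ {sol} _ _ {s} _.
Arguments gd_cost_le {X dist n I sol} _ {s} _ _.

Theorem theorem1 :
  forall (X : Type) (dist : X -> X -> R) (bip : bool) (m : nat)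
         (I : instance X (2 * m)),
    metric dist ->
    valid_instance bip I ->
    forall s : gstate (2 * m),
      gd_reach dist I s ->
      gd_done s ->
      forall sol : seq (mtriple (2 * m)),
        offline_solution I sol ->
        Rle (total_cost dist I (out s)) (Rmult (INR (2 * m + 1)) (total_cost dist I sol)).
Proof.
move=> X dist bip m I dist_metric [_ [_ signs]] s reach finished sol sol_ok.
have sgn_shape : (forall i, sgn I i = 0%Z) \/
                 (forall i, sgn I i = 1%Z \/ sgn I i = (-1)%Z).
  by case: bip signs => [[? _]|?]; [right | left].
exact: (gd_cost_le sol_ok (invariant_reach dist_metric sol_ok sgn_shape reach) finished).
Qed.
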